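(* Let $f:[0,1]^n \to \mathbb{R}_+$ be a differentiable DR-submodular function, let $\vec{x}^* \in \arg\max_{\vec{z}\in[0,1]^n} f(\vec{z})$, and let $\alpha \ge 0$ be a constant. Consider a differentiable trajectory $(\vec{x}^{(t)}, \vec{y}^{(t)})_{0 \le t \le 1}$ in $[0,1]^n \times [0,1]^n$ with $\vec{x}^{(0)} = \vec{0}$, $\vec{y}^{(0)} = \vec{1}$, $\vec{x}^{(t)} \le \vec{y}^{(t)}$ for all $t$, and $\vec{x}^{(1)} = \vec{y}^{(1)}$. Let $\vec{p}^{(t)}$ be the projection of $\vec{x}^*$ onto the box $[\vec{x}^{(t)}, \vec{y}^{(t)}]$, i.e. $p^{(t)}_i = \min\{\max\{x^*_i, x^{(t)}_i\}, y^{(t)}_i\}$. Suppose that for all $t \in [0,1]$ $$\frac{d}{dt}\left(\frac{1}{2}\left(f(\vec{x}^{(t)}) + f(\vec{y}^{(t)})\right) + \alpha f(\vec{p}^{(t)})\right) \ge 0,$$ equivalently $\frac12\left(\langle \nabla f(\vec{x}^{(t)}), \dot{\vec{x}}^{(t)}\rangle + \langle \nabla f(\vec{y}^{(t)}), \dot{\vec{y}}^{(t)}\rangle\right) + \alpha \langle \nabla f(\vec{p}^{(t)}), \dot{\vec{p}}^{(t)}\rangle \ge 0$. Then $f(\vec{x}^{(1)}) \ge \frac{\alpha}{1+\alpha} f(\vec{x}^* )$.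
   Context: A function $f:[0,1]^n \to \mathbb{R}_+$ is DR-submodular if for all $\vec{x}\le\vec{y}$ in $[0,1]^n$ (coordinate-wise), all $i\in[n]$ and $\delta\in[0,1]$ with $\vec{x}+\delta\vec{1}_{\{i\}}, \vec{y}+\delta\vec{1}_{\{i\}} \in [0,1]^n$, $f(\vec{x}+\delta\vec{1}_{\{i\}})-f(\vec{x}) \ge f(\vec{y}+\delta\vec{1}_{\{i\}})-f(\vec{y})$. For differentiable $f$ this is equivalent to $\nabla f(\vec{x}) \ge \nabla f(\vec{y})$ whenever $\vec{x}\le\vec{y}$. Dots denote time derivatives. *)

From HB Require Import structures.
From mathcomp Require Import all_boot all_order all_algebra.
From mathcomp Require Import all_classical all_reals all_analysis.
Set Implicit Arguments. Unset Strict Implicit. Unset Printing Implicit Defensive.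
Import Order.TTheory GRing.Theory Num.Theory.
Import numFieldNormedType.Exports.
Local Open Scope ring_scope.

(* Points of R^n are row vectors 'rV[R]_n; coordinate i of z is z 0 i. *)

Definition in_unit_box (R : realType) (n : nat) (z : 'rV[R]_n) : Prop :=
  forall i : 'I_n, 0 <= z 0 i <= 1.

Definition vle (R : realType) (n : nat) (u v : 'rV[R]_n) : Prop :=
  forall i : 'I_n, u 0 i <= v 0 i.

Definition DR_submodular (R : realType) (n : nat) (f : 'rV[R]_n -> R) : Prop :=
  forall (x y : 'rV[R]_n) (i : 'I_n) (delta : R),
    in_unit_box x -> in_unit_box y -> vle x y ->
    0 <= delta <= 1 ->
    in_unit_box (x + delta *: delta_mx 0 i) ->
    in_unit_box (y + delta *: delta_mx 0 i) ->
    f (x + delta *: delta_mx 0 i) - f x >= f (y + delta *: delta_mx 0 i) - f y.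

Definition box_proj (R : realType) (n : nat) (xs x y : 'rV[R]_n) : 'rV[R]_n :=
  \row_i Num.min (Num.max (xs 0 i) (x 0 i)) (y 0 i).

From HB Require Import structures.
From mathcomp Require Import all_boot all_order all_algebra.
From mathcomp Require Import all_classical all_reals all_analysis.
From mathcomp Require Import lra.
Import Order.TTheory GRing.Theory Num.Theory.
Import numFieldNormedType.Exports.
Local Open Scope ring_scope.
Local Open Scope classical_set_scope.

(* The potential Phi(t) has a nonnegative derivative on ]0,1[ and is
   continuous at both ends (f is continuous on the box and the projection
   onto a box is 1-Lipschitz in its corners), so Phi(0) <= Phi(1).  At t = 0
   the box is [0,1]^n, which contains [xs], so Phi(0) >= alpha f(xs)
   because f >= 0; at t = 1 the box collapses to the point x(1), so
   Phi(1) = (1 + alpha) f(x(1)). *)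

Section lipschitz_min_max.
Context {R : realType}.

Lemma subr_le_dist (a a' : R) : a - a' <= `|a - a'| /\ a' - a <= `|a - a'|.
Proof. by rewrite ler_norm distrC ler_norm. Qed.

Lemma dist_max_le (a a' b b' : R) :
  `|Num.max a b - Num.max a' b'| <= `|a - a'| + `|b - b'|.
Proof.
have [? ?] := subr_le_dist a a'; have [? ?] := subr_le_dist b b'.
by case: (lerP a b) => ?; case: (lerP a' b') => ?;
  rewrite ler_norml; apply/andP; split; lra.
Qed.

Lemma dist_min_le (a a' b b' : R) :
  `|Num.min a b - Num.min a' b'| <= `|a - a'| + `|b - b'|.
Proof.
have [? ?] := subr_le_dist a a'; have [? ?] := subr_le_dist b b'.
by case: (lerP a b) => ?; case: (lerP a' b') => ?;
  rewrite ler_norml; apply/andP; split; lra.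
Qed.

Lemma ler_mx_norm_entry {m n} (M : 'M[R]_(m, n)) i j : `|M i j| <= `|M|.
Proof. by rewrite [X in _ <= X]mx_normrE (le_bigmax _ _ (i, j)). Qed.

End lipschitz_min_max.

Section box_projection.
Context {R : realType} {n : nat}.
Implicit Types (s a b z : 'rV[R]_n).

Lemma box_proj_in_unit_box s {a b} :
  in_unit_box a -> in_unit_box b -> in_unit_box (box_proj s a b).
Proof.
move=> ha hb i; rewrite mxE; have /andP[a0 _] := ha i; have /andP[b0 b1] := hb i.
by rewrite le_min b0 le_max a0 orbT ge_min b1 orbT.
Qed.

Lemma box_proj_unit_box s : in_unit_box s -> box_proj s 0 (const_mx 1) = s.
Proof.
by move=> hs; apply/rowP => i; have /andP[? ?] := hs i; rewrite !mxE max_l ?min_l.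
Qed.

Lemma box_proj_diag s z : box_proj s z z = z.
Proof. by apply/rowP => i; rewrite mxE min_r // le_max lexx orbT. Qed.

Lemma box_proj_lipschitz s a a' b b' :
  `|box_proj s a b - box_proj s a' b'| <= `|a - a'| + `|b - b'|.
Proof.
rewrite [X in X <= _]mx_normrE; apply: bigmax_le => [|[i j] _ /=].
  by rewrite addr_ge0.
rewrite !mxE; apply: le_trans (dist_min_le _ _ _ _) (lerD _ _).
  apply: le_trans (dist_max_le _ _ _ _) _.
  by rewrite subrr normr0 add0r; have := ler_mx_norm_entry (a - a') 0 j; rewrite !mxE.
by have := ler_mx_norm_entry (b - b') 0 j; rewrite !mxE.
Qed.

Lemma box_proj_cvg {T : Type} {F : set_system T} {FF : Filter F} s
    {a b : T -> 'rV[R]_n} {a0 b0} :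
  a @ F --> a0 -> b @ F --> b0 ->
  box_proj s (a t) (b t) @[t --> F] --> box_proj s a0 b0.
Proof.
move=> /cvgrPdist_lt ha /cvgrPdist_lt hb; apply/cvgrPdist_lt => e e0.
near=> t; apply: le_lt_trans (box_proj_lipschitz _ _ _ _ _) _.
rewrite (splitr e) ltrD //; near: t; [apply: ha | apply: hb]; exact: divr_gt0.
Unshelve. all: by end_near.
Qed.

End box_projection.

Definition potential {R : realType} {n : nat} (f : 'rV[R]_n -> R) (alpha : R)
    (xs a b : 'rV[R]_n) : R :=
  2^-1 * (f a + f b) + alpha * f (box_proj xs a b).

Section potential.
Context {R : realType} {n : nat} {f : 'rV[R]_n -> R} {alpha : R} {xs : 'rV[R]_n}.

Lemma potential_cvg {T : Type} {F : set_system T} {FF : Filter F}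
    {a b : T -> 'rV[R]_n} {a0 b0} :
  (forall z, in_unit_box z -> {for z, continuous f}) ->
  in_unit_box a0 -> in_unit_box b0 -> a @ F --> a0 -> b @ F --> b0 ->
  potential f alpha xs (a t) (b t) @[t --> F] --> potential f alpha xs a0 b0.
Proof.
move=> fc a0_box b0_box ha hb.
apply: cvgD; apply: cvgM; try exact: cvg_cst.
- exact: cvgD (cvg_comp _ _ ha (fc _ a0_box)) (cvg_comp _ _ hb (fc _ b0_box)).
- exact: cvg_comp _ _ (box_proj_cvg xs ha hb)
    (fc _ (box_proj_in_unit_box xs a0_box b0_box)).
Qed.

Lemma potential_unit_box :
  (forall z, in_unit_box z -> 0 <= f z) -> in_unit_box xs -> 0 <= alpha ->
  alpha * f xs <= potential f alpha xs 0 (const_mx 1).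
Proof.
move=> f_ge0 xs_box alpha_ge0.
have box0 : in_unit_box (0 : 'rV[R]_n) by move=> i; rewrite mxE lexx ler01.
have box1 : in_unit_box (const_mx 1 : 'rV[R]_n) by move=> i; rewrite mxE lexx ler01.
by rewrite /potential box_proj_unit_box // lerDr mulr_ge0 ?addr_ge0 ?f_ge0.
Qed.

Lemma potential_diag z : potential f alpha xs z z = (1 + alpha) * f z.
Proof. by rewrite /potential box_proj_diag; lra. Qed.

End potential.

Theorem lemma3 (R : realType) (n : nat) (f : 'rV[R]_n -> R)
  (xs : 'rV[R]_n) (alpha : R) (x y : R -> 'rV[R]_n) :
  (forall z, in_unit_box z -> 0 <= f z) ->
  (forall z, in_unit_box z -> differentiable f z) ->
  DR_submodular f ->
  in_unit_box xs -> (forall z, in_unit_box z -> f z <= f xs) ->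
  0 <= alpha ->
  (forall t, t \in `[0, 1] -> in_unit_box (x t) /\ in_unit_box (y t)) ->
  {within `[0, 1], continuous x} -> {within `[0, 1], continuous y} ->
  {in `]0, 1[, forall t, derivable x t 1} ->
  {in `]0, 1[, forall t, derivable y t 1} ->
  x 0 = 0 -> y 0 = const_mx 1 ->
  (forall t, t \in `[0, 1] -> vle (x t) (y t)) ->
  x 1 = y 1 ->
  (let Phi := fun t : R =>
     2^-1 * (f (x t) + f (y t)) + alpha * f (box_proj xs (x t) (y t)) in
   {in `]0, 1[, forall t, derivable Phi t 1 /\ 0 <= Phi^`() t}) ->
  f (x 1) >= alpha / (1 + alpha) * f xs.
Proof.
(* DR-submodularity, the optimality of [xs], the derivability of the
   trajectory and [x <= y] only serve, in the paper, to establish the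
   derivative condition on Phi, which is assumed here. *)
move=> f_ge0 f_diff _ xs_box _ alpha_ge0 xy_box x_cont y_cont _ _ x0 y0 _ x1y1.
pose Phi t := potential f alpha xs (x t) (y t).
move=> Phi_hyp; have Phi_deriv t : t \in `]0, 1[%R ->
    derivable Phi t 1 /\ 0 <= Phi^`() t.
  by move=> t01; apply: Phi_hyp; rewrite inE.
have f_cont z : in_unit_box z -> {for z, continuous f}.
  by move=> z_box; exact: differentiable_continuous (f_diff z z_box).
have [[x0_box y0_box] [x1_box y1_box]] : (in_unit_box (x 0) /\ in_unit_box (y 0))
    /\ (in_unit_box (x 1) /\ in_unit_box (y 1)).
  by split; apply: xy_box; rewrite inE /= in_itv /= lexx ler01.
have [_ x_0 x_1] := (continuous_within_itvP x ltr01).1 x_cont.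
have [_ y_0 y_1] := (continuous_within_itvP y ltr01).1 y_cont.
have Phi_cont : {within `[0, 1], continuous Phi}.
  apply: derivable_oo_LRcontinuous_within; split.
  - by move=> t /Phi_deriv[].
  - exact: potential_cvg f_cont x0_box y0_box x_0 y_0.
  - exact: potential_cvg f_cont x1_box y1_box x_1 y_1.
have := ger0_derive1_ndecr (fun t t01 => (Phi_deriv t t01).1)
  (fun t t01 => (Phi_deriv t t01).2) Phi_cont (lexx 0) ler01 (lexx 1).
rewrite /Phi x0 y0 -x1y1 potential_diag => Phi01.
have Phi0_ge := potential_unit_box f_ge0 xs_box alpha_ge0.
have alpha1_gt0 : 0 < 1 + alpha by rewrite ltr_wpDr.
rewrite mulrAC ler_pdivrMr // [f (x 1) * _]mulrC.
exact: le_trans Phi0_ge Phi01.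
Qed.
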